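(* Let $a>0$ and for $j\ge0$ put $$g_j=\Big(\frac a2\Big)^j\frac{(2j)!}{2^j\,j!\,j!}.$$ Then for every $j\ge5$, $$g_j\ \ge\ \frac1j\sum_{k=1}^{\lfloor (j-1)/2\rfloor}\ \sum_{j_1+\dots+j_k=j-k-1}\Big(\frac a2\Big)^{k+1}\frac{(k+1)(k+2)}{2}\prod_{p=1}^k\frac{g_{j_p}}{j_p+1},$$ where the inner sum is over ordered $k$-tuples $(j_1,\dots,j_k)$ of positive integers with $j_1+\dots+j_k=j-k-1$.
   Context: Here $\lfloor\cdot\rfloor$ denotes the integer part. Equivalently $g_j=(a/2)^j\frac{1\cdot3\cdots(2j-1)}{j!}$, the Taylor coefficients of $(1-at)^{-1/2}=\sum_{j\ge0}g_jt^j$. *)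

From HB Require Import structures.
From mathcomp Require Import all_boot all_order all_algebra.
Set Implicit Arguments. Unset Strict Implicit. Unset Printing Implicit Defensive.
Import Order.TTheory GRing.Theory Num.Theory.
Local Open Scope ring_scope.

Definition gcoef (R : realFieldType) (a : R) (j : nat) : R :=
  (a / 2) ^+ j * ((2 * j)`!)%:R / ((2 ^ j)%:R * (j`!)%:R * (j`!)%:R).

From HB Require Import structures.
From mathcomp Require Import all_boot all_order all_algebra.
From mathcomp.algebra_tactics Require Import ring lra.
From mathcomp Require Import zify.
Set Implicit Arguments. Unset Strict Implicit. Unset Printing Implicit Defensive.
Import Order.TTheory GRing.Theory Num.Theory.
Local Open Scope ring_scope.

(* Write b_n = C(2n,n)/4^n, so that g_n = a^n b_n.  The proof has three layers.
   1. Central binomial coefficients: b_(n+1) = (2n+1)/(2n+2) b_n, which telescopes to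
      sum_(n<N) b_n = 2N b_N and sum_(n<N) b_n/(n+1) = 2 - 2b_N, and gives the
      Wallis-type bounds 1 <= 4N b_N^2 and (3N+1) b_N^2 <= 1.
   2. Compositions: if t_1 + ... + t_k = m, then m = sum_p t_p, and marking one part
      shows  m sum_t prod_p u(t_p) <= k (sum_n n u_n)(sum_n u_n)^(k-1)  for u >= 0.
      With u_n = b_n/(n+1) the two sums are at most 2j b_j - 1 and 1 - 2b_j, so the
      right-hand side of the theorem is at most (a^j/j)(2j b_j - 1) Phi_j(1 - 2b_j)
      for an explicit polynomial Phi_j.
   3. The scalar inequality (2jb - 1) Phi_j(1 - 2b) <= jb for b in the Wallis range:
      each j is handled by a "certificate" (lo, T0, D) with lo <= b, jb <= T0 and
      Phi_j(1 - 2lo) <= D; for 5 <= j <= 13 Phi_j is evaluated exactly, for j >= 14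
      it is bounded by the closed forms of sum k(k+1)(k+2) x^(k-1) and
      sum k^2(k+1)(k+2) x^(k-1). *)

Section CentralBinomial.
Variable R : realFieldType.

Definition cbin (n : nat) : R := gcoef 1 n.

Lemma gcoef_cbin (a : R) (n : nat) : gcoef a n = a ^+ n * cbin n.
Proof. by rewrite /cbin /gcoef exprMn mul1r !mulrA. Qed.

Lemma cbin0 : cbin 0 = 1.
Proof. by rewrite /cbin /gcoef muln0 fact0 expn0 expr0 !mul1r invr1. Qed.

Lemma cbin_rec (n : nat) : (2 * n%:R + 2) * cbin n.+1 = (2 * n%:R + 1) * cbin n.
Proof.
rewrite /cbin /gcoef.
have -> : (2 * n.+1 = (2 * n).+2)%N by rewrite mulnS addnC addn2.
rewrite !factS expnS exprS !natrM -[(2 * n).+2]addn2 -[(2 * n).+1]addn1 -[n.+1]addn1 !natrD.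
have nz_fact m : (m`!)%:R != 0 :> R by rewrite pnatr_eq0 -lt0n fact_gt0.
have nz_pow : (2 ^ n)%:R != 0 :> R by rewrite pnatr_eq0 expn_eq0.
have nz_n1 : n%:R + 1 != 0 :> R by rewrite natr1 pnatr_eq0.
by field; rewrite nz_fact nz_pow nz_n1.
Qed.

Lemma cbin_gt0 (n : nat) : 0 < cbin n.
Proof.
elim: n => [|n IH]; first by rewrite cbin0.
have n_ge0 : 0 <= n%:R :> R by [].
have := cbin_rec n; nra.
Qed.

(* Telescoping: 2(n+1) b_(n+1) - 2n b_n = b_n. *)
Lemma sum_cbin (N : nat) : \sum_(n < N) cbin n = 2 * N%:R * cbin N.
Proof.
elim: N => [|N IH]; first by rewrite big_ord0 mulr0 mul0r.
by rewrite big_ord_recr /= IH -natr1; have := cbin_rec N; lra.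
Qed.

(* Telescoping: 2 b_n - 2 b_(n+1) = b_n / (n+1). *)
Lemma sum_cbin_div (N : nat) : \sum_(n < N) cbin n / (n.+1)%:R = 2 - 2 * cbin N.
Proof.
elim: N => [|N IH]; first by rewrite big_ord0 cbin0; lra.
rewrite big_ord_recr /= IH.
have nz_N1 : N.+1%:R != 0 :> R by rewrite pnatr_eq0.
suff -> : cbin N / N.+1%:R = 2 * cbin N - 2 * cbin N.+1 by lra.
apply: (mulIf nz_N1); rewrite mulrBl divfK // -[N.+1%:R]natr1.
by have := cbin_rec N; lra.
Qed.

(* Lower Wallis bound: 4N b_N^2 increases from its value 1 at N = 1. *)
Lemma cbin_sq_lower (N : nat) : (1 <= N)%N -> 1 <= 4 * N%:R * cbin N ^+ 2.
Proof.
elim: N => [//|[_ _|N IH _]].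
  by have := cbin_rec 0; rewrite cbin0 mulr0 add0r !mulr1; nra.
have {}IH := IH isT; have rec := cbin_rec N.+1.
rewrite -natr1; move: IH rec; set x := N.+1%:R; set b := cbin N.+1; set c := cbin N.+2.
move=> IH rec.
have x_ge1 : 1 <= x by rewrite /x ler1n.
have sq : (2 * x + 2) ^+ 2 * c ^+ 2 = (2 * x + 1) ^+ 2 * b ^+ 2 by rewrite -!exprMn rec.
nra.
Qed.

(* Upper Wallis bound, by induction: (3N+4)(2N+1)^2 <= (3N+1)(2N+2)^2. *)
Lemma cbin_sq_upper (N : nat) : (3 * N%:R + 1) * cbin N ^+ 2 <= 1.
Proof.
elim: N => [|N IH]; first by rewrite cbin0; lra.
have rec := cbin_rec N; rewrite -natr1.
move: IH rec; set x := N%:R; set b := cbin N; set c := cbin N.+1 => IH rec.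
have x_ge0 : 0 <= x by rewrite /x ler0n.
have sq : (2 * x + 2) ^+ 2 * c ^+ 2 = (2 * x + 1) ^+ 2 * b ^+ 2 by rewrite -!exprMn rec.
nra.
Qed.
End CentralBinomial.

Section Compositions.
Variables (R : realFieldType) (u : nat -> R).
Hypothesis u_ge0 : forall n, 0 <= u n.

Definition marked_weight (k j : nat) (p q : 'I_k) (n : 'I_j) : R :=
  if (0 < n)%N then (if q == p then n%:R * u n else u n) else 0.

Lemma marked_weight_ge0 k j (p q : 'I_k) (n : 'I_j) : 0 <= marked_weight p q n.
Proof.
rewrite /marked_weight; case: ifP => // _; case: ifP => // _.
exact: mulr_ge0.
Qed.

Lemma composition_marked k j m (t : {ffun 'I_k -> 'I_j}) :
  (\sum_(p < k) (t p : nat))%N = m -> [forall p, (0 < t p)%N] ->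
  m%:R * \prod_(q < k) u (t q) = \sum_(p < k) \prod_(q < k) marked_weight p q (t q).
Proof.
move=> <- /forallP t_pos; rewrite natr_sum mulr_suml; apply: eq_bigr => p _.
rewrite (bigD1 p) //= [RHS](bigD1 p) //= {1}/marked_weight t_pos eqxx mulrA.
by congr (_ * _); apply: eq_bigr => q q_p; rewrite /marked_weight t_pos (negbTE q_p).
Qed.

(* Summing the marked weights over all tuples factorises: m times the sum of
   u-products over the compositions of m into k parts of size < j is at most
   k (sum_(0<n<j) n u_n) (sum_(0<n<j) u_n)^(k-1). *)
Lemma composition_sum_le k j m :
  m%:R * \sum_(t : {ffun 'I_k -> 'I_j} |
                 ((\sum_(p < k) (t p : nat))%N == m) && [forall p, (0 < t p)%N])
           \prod_(q < k) u (t q)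
  <= k%:R * (\sum_(n < j | (0 < n)%N) n%:R * u n) * (\sum_(n < j | (0 < n)%N) u n) ^+ k.-1.
Proof.
have marked_ge0 t : 0 <= \sum_(p < k) \prod_(q < k) marked_weight p q (t q).
  by apply: sumr_ge0 => p _; apply: prodr_ge0 => q _; exact: marked_weight_ge0.
have factor p : \sum_(t : {ffun 'I_k -> 'I_j}) \prod_(q < k) marked_weight p q (t q)
    = (\sum_(n < j | (0 < n)%N) n%:R * u n) * (\sum_(n < j | (0 < n)%N) u n) ^+ k.-1.
  rewrite -(bigA_distr_bigA (marked_weight p)) /= (bigD1 p) //=; congr (_ * _).
    by rewrite [RHS]big_mkcond; apply: eq_bigr => n _; rewrite /marked_weight eqxx.
  rewrite -[in RHS](card_ord k) -(cardC1 p) -prodr_const; apply: eq_bigr => q q_p.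
  by rewrite [RHS]big_mkcond; apply: eq_bigr => n _; rewrite /marked_weight (negbTE q_p).
rewrite mulr_sumr.
under eq_bigr => t /andP[/eqP t_sum t_pos] do rewrite (composition_marked t_sum t_pos).
(* Extending the sum to all tuples only adds nonnegative terms. *)
apply: (@le_trans _ _
  (\sum_(t : {ffun 'I_k -> 'I_j}) \sum_(p < k) \prod_(q < k) marked_weight p q (t q))).
  rewrite [X in _ <= X](bigID (fun t : {ffun 'I_k -> 'I_j} =>
    ((\sum_(p < k) (t p : nat))%N == m) && [forall p, (0 < t p)%N])) /=.
  by rewrite lerDl; apply: sumr_ge0.
by rewrite exchange_big (eq_bigr _ (fun p _ => factor p)) sumr_const card_ord -mulrA mulr_natl.
Qed.

End Compositions.

Section Majorant.
Variable R : realFieldType.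

Definition maj_coef (j k : nat) : R :=
  (1/2) ^+ k.+1 * ((k.+1 * k.+2)%:R / 2) * k%:R / (j - k - 1)%:R.

Definition Phi (j : nat) (U : R) : R :=
  \sum_(1 <= k < ((j - 1) %/ 2).+1) maj_coef j k * U ^+ k.-1.

Lemma maj_coef_ge0 j k : 0 <= maj_coef j k.
Proof. by rewrite /maj_coef !(mulr_ge0, divr_ge0, exprn_ge0) ?ler0n ?invr_ge0. Qed.

Lemma Phi_ge0 j U : 0 <= U -> 0 <= Phi j U.
Proof.
by move=> U_ge0; apply: sumr_ge0 => k _; rewrite mulr_ge0 ?maj_coef_ge0 ?exprn_ge0.
Qed.

Lemma Phi_mono j U V : 0 <= U -> U <= V -> Phi j U <= Phi j V.
Proof.
move=> U_ge0 UV; apply: ler_sum => k _; rewrite ler_wpM2l ?maj_coef_ge0 //.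
by rewrite lerXn2r // nnegrE (le_trans U_ge0).
Qed.

Definition wt (n : nat) : R := cbin R n / n.+1%:R.

Lemma wt_ge0 n : 0 <= wt n.
Proof. by rewrite /wt divr_ge0 ?ler0n // ltW ?cbin_gt0. Qed.

Lemma sum_pos_ord (F : nat -> R) j : (0 < j)%N ->
  \sum_(n < j | (0 < n)%N) F n = \sum_(n < j) F n - F 0%N.
Proof.
case: j => // j _; rewrite big_mkcond /= big_ord_recl [X in _ = X - _]big_ord_recl /=.
by rewrite add0r addrC addKr.
Qed.

Lemma sum_wt j : (0 < j)%N -> \sum_(n < j | (0 < n)%N) wt n = 1 - 2 * cbin R j.
Proof. by move=> j_gt0; rewrite sum_pos_ord // sum_cbin_div /wt cbin0; lra. Qed.

(* First moment: sum_(0<n<j) n u_n <= sum_(0<n<j) b_n = 2j b_j - 1. *)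
Lemma sum_moment_wt j : (0 < j)%N ->
  \sum_(n < j | (0 < n)%N) n%:R * wt n <= 2 * j%:R * cbin R j - 1.
Proof.
move=> j_gt0; apply: (@le_trans _ _ (\sum_(n < j | (0 < n)%N) cbin R n));
  last by rewrite sum_pos_ord // sum_cbin cbin0.
apply: ler_sum => n _; rewrite /wt mulrA ler_pdivrMr ?ltr0n // -natr1.
by have := cbin_gt0 R n; have : 0 <= n%:R :> R by []; nra.
Qed.

(* Since a composition of m into parts t_p has sum m, the a-dependence of a
   product of g's is the single factor a^m. *)
Lemma prod_gcoef_wt (a : R) k j m (t : {ffun 'I_k -> 'I_j}) :
  (\sum_(p < k) (t p : nat))%N = m ->
  \prod_(p < k) (gcoef a (t p) / (t p : nat).+1%:R) = a ^+ m * \prod_(p < k) wt (t p).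
Proof.
move=> <-; rewrite -prodrXr -big_split /=; apply: eq_bigr => p _.
by rewrite gcoef_cbin /wt -mulrA.
Qed.

(* b_j <= 1/2 for j >= 1, so that U = 1 - 2 b_j is a legitimate argument of Phi. *)
Lemma cbin_le_half j : (0 < j)%N -> cbin R j <= 1/2.
Proof.
move=> j_gt0; have := cbin_sq_upper R j; have := cbin_gt0 R j.
have : 1 <= j%:R :> R by rewrite ler1n.
nra.
Qed.

(* The k-th inner sum of the theorem is at most a^j (2j b_j - 1) c_(j,k) (1 - 2b_j)^(k-1):
   factor out a^j, then bound the remaining sum over compositions of m = j-k-1
   by composition_sum_le with the weights u_n. *)
Lemma inner_sum_le (a : R) (j k : nat) : 0 <= a -> (1 <= k)%N -> (k <= (j - 1) %/ 2)%N ->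
  \sum_(t : {ffun 'I_k -> 'I_j} |
          ((\sum_(p < k) (t p : nat))%N == (j - k - 1)%N) && [forall p, (0 < t p)%N])
    ((a / 2) ^+ k.+1 * ((k.+1 * k.+2)%:R / 2)
     * \prod_(p < k) (gcoef a (t p) / ((t p : nat).+1)%:R))
  <= a ^+ j * ((2 * j%:R * cbin R j - 1) * (maj_coef j k * (1 - 2 * cbin R j) ^+ k.-1)).
Proof.
move=> a_ge0 k_ge1; rewrite leq_divRL // => k2_le.
set m := (j - k - 1)%N; set X := (k.+1 * k.+2)%:R / 2 : R.
set c := 2 * j%:R * cbin R j - 1; set U := 1 - 2 * cbin R j.
set S := \sum_(t : {ffun 'I_k -> 'I_j} |
            ((\sum_(p < k) (t p : nat))%N == m) && [forall p, (0 < t p)%N]) \prod_(p < k) wt (t p).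
have m_gt0 : (0 < m)%N by rewrite /m; lia.
have j_gt0 : (0 < j)%N by lia.
have U_ge0 : 0 <= U by rewrite /U; have := cbin_le_half j_gt0; lra.
have S_le : m%:R * S <= k%:R * c * U ^+ k.-1.
  apply: le_trans (composition_sum_le (@wt_ge0) k j m) _.
  rewrite sum_wt // -/U ler_wpM2r ?exprn_ge0 // ler_wpM2l ?ler0n //.
  exact: sum_moment_wt.
have -> : \sum_(t : {ffun 'I_k -> 'I_j} |
              ((\sum_(p < k) (t p : nat))%N == m) && [forall p, (0 < t p)%N]) ((a / 2) ^+ k.+1 * X
            * \prod_(p < k) (gcoef a (t p) / ((t p : nat).+1)%:R))
          = (a / 2) ^+ k.+1 * X * a ^+ m * S.
  rewrite /S !big_distrr /=; apply: eq_bigr => t /andP[/eqP t_sum _].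
  by rewrite (prod_gcoef_wt a t_sum) mulrA.
have a_pow : a ^+ j = a ^+ k.+1 * a ^+ m by rewrite -exprD /m; congr (_ ^+ _); lia.
have m_pos : 0 < m%:R :> R by rewrite ltr0n.
have {}S_le : S <= k%:R * c * U ^+ k.-1 / m%:R by rewrite ler_pdivlMr // mulrC.
have P_ge0 : 0 <= a ^+ k.+1 * (1/2) ^+ k.+1 * X * a ^+ m.
  by rewrite !mulr_ge0 ?exprn_ge0 ?divr_ge0 ?invr_ge0 ?ler0n.
have -> : (a / 2) ^+ k.+1 = a ^+ k.+1 * (1/2) ^+ k.+1 by rewrite -exprMn mul1r.
suff -> : a ^+ j * (c * (maj_coef j k * U ^+ k.-1)) = (a ^+ k.+1 * (1/2) ^+ k.+1 * X * a ^+ m)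
    * (k%:R * c * U ^+ k.-1 / m%:R) by exact: ler_wpM2l.
rewrite a_pow /maj_coef -/m -/X.
move: (a ^+ k.+1) (a ^+ m) ((1 / 2 : R) ^+ k.+1) (U ^+ k.-1) => A M H V.
by field; rewrite gt_eqF.
Qed.

Lemma double_sum_le (a : R) (j : nat) : 0 <= a ->
  \sum_(1 <= k < ((j - 1) %/ 2).+1)
    \sum_(t : {ffun 'I_k -> 'I_j} |
            ((\sum_(p < k) (t p : nat))%N == (j - k - 1)%N) && [forall p, (0 < t p)%N])
      ((a / 2) ^+ k.+1 * ((k.+1 * k.+2)%:R / 2)
       * \prod_(p < k) (gcoef a (t p) / ((t p : nat).+1)%:R))
  <= a ^+ j * ((2 * j%:R * cbin R j - 1) * Phi j (1 - 2 * cbin R j)).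
Proof.
move=> a_ge0; rewrite /Phi mulr_sumr mulr_sumr; apply: ler_sum_nat => k /andP[k_ge1 k_lt].
by apply: inner_sum_le; rewrite // -ltnS.
Qed.
End Majorant.

Section PowerSums.
Variable R : realFieldType.

(* If Q_k = f_k + x Q_(k+1) with x, Q >= 0, then Q_0 dominates every partial sum
   of sum_k f_k x^k (Q_K is the tail of the series after K terms). *)
Lemma partial_sum_le_tail (f Q : nat -> R) (x : R) (K : nat) :
  0 <= x -> (forall k, 0 <= Q k) -> (forall k, Q k = f k + x * Q k.+1) ->
  \sum_(k < K) f k * x ^+ k <= Q 0%N.
Proof.
move=> x_ge0 Q_ge0 Q_rec.
have split_tail : \sum_(k < K) f k * x ^+ k + x ^+ K * Q K = Q 0%N.
  elim: K => [|K IH]; first by rewrite big_ord0 add0r expr0 mul1r.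
  by rewrite big_ord_recr /= -IH -addrA (Q_rec K) exprSr; congr (_ + _); ring.
by rewrite -split_tail lerDl mulr_ge0 ?exprn_ge0.
Qed.

(* Closed forms of the tails sum_(k >= K) P(k) x^(k-K), x = 1 - y, for the
   cubic P(k) = (k+1)(k+2)(k+3) and the quartic P(k) = (k+1)^2(k+2)(k+3). *)
Definition tail3 (y : R) (K : nat) : R :=
  let K := K%:R in
  (K+1)*(K+2)*(K+3)/y + 3*(K+2)*(K+3)*(1-y)/y^+2 + 6*(K+3)*(1-y)^+2/y^+3 + 6*(1-y)^+3/y^+4.

Definition tail4 (y : R) (K : nat) : R :=
  let K := K%:R in
  (K+1)^+2*(K+2)*(K+3)/y + (K+2)*(K+3)*(4*K+7)*(1-y)/y^+2 + 6*(K+3)*(2*K+5)*(1-y)^+2/y^+3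
  + (24*K+78)*(1-y)^+3/y^+4 + 24*(1-y)^+4/y^+5.

Lemma tail3_ge0 (y : R) K : 0 < y -> y <= 1 -> 0 <= tail3 y K.
Proof.
move=> y_gt0 y_le1; have K_ge0 : 0 <= K%:R :> R by [].
have x_ge0 : 0 <= 1 - y by lra.
rewrite /tail3; repeat apply: addr_ge0; apply: divr_ge0; try (apply: exprn_ge0; lra);
  repeat apply: mulr_ge0; try apply: exprn_ge0; lra.
Qed.

Lemma tail4_ge0 (y : R) K : 0 < y -> y <= 1 -> 0 <= tail4 y K.
Proof.
move=> y_gt0 y_le1; have K_ge0 : 0 <= K%:R :> R by [].
have x_ge0 : 0 <= 1 - y by lra.
rewrite /tail4; repeat apply: addr_ge0; apply: divr_ge0; try (apply: exprn_ge0; lra);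
  repeat apply: mulr_ge0; try apply: exprn_ge0; lra.
Qed.

Lemma tail3_rec (y : R) K : y != 0 ->
  tail3 y K = (K%:R + 1) * (K%:R + 2) * (K%:R + 3) + (1 - y) * tail3 y K.+1.
Proof. by move=> y_neq0; rewrite /tail3 -natr1; field. Qed.

Lemma tail4_rec (y : R) K : y != 0 ->
  tail4 y K = (K%:R + 1) ^+ 2 * (K%:R + 2) * (K%:R + 3) + (1 - y) * tail4 y K.+1.
Proof. by move=> y_neq0; rewrite /tail4 -natr1; field. Qed.

Lemma cubic_power_sum_le (y : R) (K : nat) : 0 < y -> y <= 1 ->
  \sum_(1 <= k < K.+1) k%:R * (k%:R + 1) * (k%:R + 2) * (1 - y) ^+ k.-1 <= 6 / y ^+ 4.
Proof.
move=> y_gt0 y_le1; have y_neq0 : y != 0 by rewrite gt_eqF.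
have -> : 6 / y ^+ 4 = tail3 y 0 by rewrite /tail3; field.
rewrite big_add1 /= big_mkord.
rewrite (eq_bigr (fun k : 'I_K => ((k%:R + 1) * (k%:R + 2) * (k%:R + 3)) * (1 - y) ^+ k));
  last by move=> k _; rewrite -natr1; ring.
apply: (partial_sum_le_tail (f := fun k : nat => (k%:R + 1) * (k%:R + 2) * (k%:R + 3))
                            (Q := tail3 y)) => [|k|k].
- lra.
- exact: tail3_ge0.
- exact: tail3_rec.
Qed.

Lemma quartic_power_sum_le (y : R) (K : nat) : 0 < y -> y <= 1 ->
  \sum_(1 <= k < K.+1) k%:R ^+ 2 * (k%:R + 1) * (k%:R + 2) * (1 - y) ^+ k.-1
  <= 24 / y ^+ 5 - 18 / y ^+ 4.
Proof.
move=> y_gt0 y_le1; have y_neq0 : y != 0 by rewrite gt_eqF.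
have -> : 24 / y ^+ 5 - 18 / y ^+ 4 = tail4 y 0 by rewrite /tail4; field.
rewrite big_add1 /= big_mkord.
rewrite (eq_bigr (fun k : 'I_K => ((k%:R + 1) ^+ 2 * (k%:R + 2) * (k%:R + 3)) * (1 - y) ^+ k));
  last by move=> k _; rewrite -natr1; ring.
apply: (partial_sum_le_tail (f := fun k : nat => (k%:R + 1) ^+ 2 * (k%:R + 2) * (k%:R + 3))
                            (Q := tail4 y)) => [|k|k].
- lra.
- exact: tail4_ge0.
- exact: tail4_rec.
Qed.
End PowerSums.

Section PhiBounds.
Variable R : realFieldType.

Lemma maj_coefE j k : (k.+1 < j)%N ->
  maj_coef R j k = (1/2) ^+ k.+1 * ((k%:R + 1) * (k%:R + 2) / 2) * k%:R / (j%:R - k%:R - 1).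
Proof.
move=> k_lt; have Sk : k.+1%:R = k%:R + 1 :> R by rewrite natr1.
have SSk : k.+2%:R = k%:R + 2 :> R by rewrite -addn2 natrD.
rewrite /maj_coef -subnDA addn1 natrB ?(ltnW k_lt) // natrM SSk Sk.
by congr (_ / _); ring.
Qed.

(* 1/(N - k) <= (N + 2k)/N^2 when 2k <= N: the error of 1/N + k/N^2 is k(N-2k)/(N^2 (N-k)). *)
Lemma inv_sub_le (N k : R) : 1 <= k -> 2 * k <= N -> 1 / (N - k) <= (N + 2 * k) / N ^+ 2.
Proof.
move=> k_ge1 k_le; have N_neq0 : N != 0 by rewrite gt_eqF //; lra.
have Nk_neq0 : N - k != 0 by rewrite gt_eqF //; lra.
rewrite -subr_ge0.
have -> : (N + 2 * k) / N ^+ 2 - 1 / (N - k) = k * (N - 2 * k) / (N ^+ 2 * (N - k)).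
  by field; rewrite N_neq0 Nk_neq0.
by rewrite divr_ge0 ?mulr_ge0 ?exprn_ge0 //; lra.
Qed.

(* The powers of 2 in c_(j,k) (2z)^(k-1) collapse to 1/4. *)
Lemma half_pow k : (1/2 : R) ^+ k.+2 * 2 ^+ k = 1/4.
Proof.
have half_2 : 1/2 * 2 = 1 :> R by field.
by rewrite -[k.+2]addn2 exprD mulrAC -exprMn half_2 expr1n mul1r; field.
Qed.

Lemma maj_term_le (j k : nat) (z : R) : (1 <= k)%N -> (k <= (j - 1) %/ 2)%N -> 0 <= z ->
  maj_coef R j k * (2 * z) ^+ k.-1 <=
  1/8 * (k%:R * (k%:R + 1) * (k%:R + 2) * z ^+ k.-1) / (j%:R - 1)
  + 1/4 * (k%:R ^+ 2 * (k%:R + 1) * (k%:R + 2) * z ^+ k.-1) / (j%:R - 1) ^+ 2.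
Proof.
move=> k_ge1; rewrite leq_divRL // => k2_le z_ge0.
rewrite maj_coefE; last by lia.
have N_ge : 2 * k%:R <= j%:R - 1 :> R.
  have : (k * 2)%:R <= (j - 1)%:R :> R by rewrite ler_nat.
  by rewrite natrM natrB 1?mulrC //; lia.
have k_ge1R : 1 <= k%:R :> R by rewrite ler1n.
case: k k_ge1 k2_le N_ge k_ge1R => // k _ _ N_ge k_ge1R /=.
rewrite [(2 * z) ^+ k]exprMn.
have zk_ge0 : 0 <= z ^+ k by apply: exprn_ge0.
move: (half_pow k) zk_ge0 N_ge k_ge1R.
move: ((1/2 : R) ^+ k.+2) ((2 : R) ^+ k) (z ^+ k) (k.+1%:R) => P Q Z K PQ Z_ge0 N_ge K_ge1.
have -> : j%:R - K - 1 = (j%:R - 1) - K by ring.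
move: N_ge; move: (j%:R - 1 : R) => N N_ge.
have N_neq0 : N != 0 by rewrite gt_eqF //; lra.
have -> : P * ((K + 1) * (K + 2) / 2) * K / (N - K) * (Q * Z)
    = (P * Q) * (K * (K + 1) * (K + 2) * Z / 2) * (1 / (N - K)) by ring.
have -> : 1/8 * (K * (K + 1) * (K + 2) * Z) / N + 1/4 * (K ^+ 2 * (K + 1) * (K + 2) * Z) / N ^+ 2
    = 1/4 * (K * (K + 1) * (K + 2) * Z / 2) * ((N + 2 * K) / N ^+ 2) by field.
rewrite PQ ler_wpM2l ?inv_sub_le //.
by rewrite mulr_ge0 ?divr_ge0 ?mulr_ge0 //; lra.
Qed.

Lemma Phi_le_power_sums (j : nat) (y : R) : (2 <= j)%N -> 0 < y -> y <= 1 ->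
  Phi j (2 * (1 - y))
  <= 1/8 * (6 / y ^+ 4) / (j%:R - 1) + 1/4 * (24 / y ^+ 5 - 18 / y ^+ 4) / (j%:R - 1) ^+ 2.
Proof.
move=> j_ge2 y_gt0 y_le1; have N_gt0 : 0 < j%:R - 1 :> R.
  by rewrite subr_gt0 (_ : 1 = 1%:R) // ltr_nat; lia.
apply: le_trans.
  apply: ler_sum_nat => k /andP[k_ge1 k_lt].
  by apply: maj_term_le => //; lra.
rewrite /= big_split /= -!mulr_suml -!mulr_sumr.
rewrite lerD // ler_pM2r ?invr_gt0 ?exprn_gt0 // ler_wpM2l ?divr_ge0 //.
- exact: cubic_power_sum_le.
- exact: quartic_power_sum_le.
Qed.
End PhiBounds.

(* Evaluate the natural-number arithmetic under every cast n%:R of a closed goal. *)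
Ltac natnorm := repeat match goal with
  |- context [ GRing.natmul 1 ?n ] => let c := eval vm_compute in n in progress change n with c
  end.

Section ScalarInequality.
Variable R : realFieldType.

(* If 1/2 <= T <= T0 and 0 <= P <= D with D (2T0 - 1) <= T0, then (2T - 1) P <= T:
   the map T |-> (2T - 1) D - T is affine, and nonpositive at T = 1/2 and T = T0. *)
Lemma affine_bound (T P T0 D : R) :
  1/2 <= T -> T <= T0 -> 0 <= P -> P <= D -> D * (2 * T0 - 1) <= T0 -> (2 * T - 1) * P <= T.
Proof.
move=> T_ge T_le P_ge0 P_le D_ok.
apply: le_trans (_ : (2 * T - 1) * D <= T); first by rewrite ler_wpM2l //; lra.
by have [D_le|D_gt] := lerP D (1/2); nra.
Qed.

(* (lo, T0, D) certifies j when every b obeying the Wallis bounds for j satisfies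
   lo <= b and j b <= T0, and Phi_j(1 - 2 lo) <= D with D (2 T0 - 1) <= T0. *)
Definition certificate (j : nat) (lo T0 D : R) : Prop :=
  [/\ 0 <= lo /\ 4 * j%:R * lo ^+ 2 <= 1, 0 <= T0 /\ j%:R ^+ 2 <= T0 ^+ 2 * (3 * j%:R + 1),
      Phi j (1 - 2 * lo) <= D & D * (2 * T0 - 1) <= T0].

Lemma certificate_sound (j : nat) (lo T0 D b : R) : (5 <= j)%N -> 0 < b ->
  1 <= 4 * j%:R * b ^+ 2 -> (3 * j%:R + 1) * b ^+ 2 <= 1 -> certificate j lo T0 D ->
  (2 * j%:R * b - 1) * Phi j (1 - 2 * b) <= j%:R * b.
Proof.
move=> j_ge5 b_gt0 lower upper [[lo_ge0 lo_le] [T0_ge0 T0_ge] Phi_le D_ok].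
have jR_ge5 : 5 <= j%:R :> R by rewrite (ler_nat R 5 j).
have lo_le_b : lo <= b by nra.
have jb_ge : 1/2 <= j%:R * b by nra.
have jb_le : j%:R * b <= T0.
  have sq_le : (j%:R * b) ^+ 2 * (3 * j%:R + 1) <= T0 ^+ 2 * (3 * j%:R + 1).
    apply: le_trans T0_ge; rewrite exprMn -mulrA [b ^+ 2 * _]mulrC.
    by rewrite ler_piMr ?exprn_ge0 //; lra.
  by rewrite ler_pM2r in sq_le; nra.
have U_ge0 : 0 <= 1 - 2 * b by nra.
rewrite -mulrA; apply: affine_bound jb_ge jb_le (Phi_ge0 j U_ge0) _ D_ok.
by apply: le_trans Phi_le; apply: Phi_mono; lra.
Qed.

Lemma Phi_le_numeric (j : nat) (y N0 A B : R) :
  0 < y -> y <= 1 -> 0 < N0 -> N0 <= j%:R - 1 ->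
  1/8 * (6 / y ^+ 4) <= A -> 1/4 * (24 / y ^+ 5 - 18 / y ^+ 4) <= B ->
  Phi j (2 * (1 - y)) <= A / N0 + B / N0 ^+ 2.
Proof.
move=> y_gt0 y_le1 N0_gt0 N0_le A_ge B_ge.
have j_ge2 : (2 <= j)%N by rewrite -(ltr_nat R) -natr1; lra.
apply: le_trans (Phi_le_power_sums j_ge2 y_gt0 y_le1) _.
have N0_sq : N0 ^+ 2 <= (j%:R - 1) ^+ 2 by rewrite lerXn2r ?nnegrE //; lra.
have A_ge0 : 0 <= 1/8 * (6 / y ^+ 4) by rewrite mulr_ge0 ?divr_ge0 ?exprn_ge0 //; lra.
have B_ge0 : 0 <= 1/4 * (24 / y ^+ 5 - 18 / y ^+ 4).
  have -> : 24 / y ^+ 5 - 18 / y ^+ 4 = (24 - 18 * y) / y ^+ 5 by field; rewrite gt_eqF.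
  by rewrite mulr_ge0 ?divr_ge0 ?exprn_ge0 //; lra.
have N_gt0 : 0 < j%:R - 1 :> R by lra.
rewrite lerD //.
- by rewrite ler_pdivrMr // [X in _ <= X]mulrAC ler_pdivlMr //; nra.
- by rewrite ler_pdivrMr ?exprn_gt0 // [X in _ <= X]mulrAC ler_pdivlMr ?exprn_gt0 //; nra.
Qed.

Ltac check_certificate :=
  rewrite /certificate /Phi /maj_coef unlock /=; natnorm; split; [split | split | | ]; lra.

(* Certificates for 5 <= j <= 13, found numerically. *)
Lemma small_certificate (j : nat) : (5 <= j <= 13)%N -> exists lo T0 D : R, certificate j lo T0 D.
Proof.
case/andP; do 5![case: j => [//|j]] => _.
do 9?[case: j => [|j]]; move=> //.
- by exists (223/1000), (5/4), (17/25); check_certificate.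
- by exists (51/250), (69/50), (1/2); check_certificate.
- by exists (47/250), (3/2), (16/25); check_certificate.
- by exists (22/125), (8/5), (53/100); check_certificate.
- by exists (83/500), (171/100), (3/5); check_certificate.
- by exists (79/500), (9/5), (13/25); check_certificate.
- by exists (3/20), (189/100), (11/20); check_certificate.
- by exists (18/125), (99/50), (49/100); check_certificate.
- by exists (69/500), (103/50), (1/2); check_certificate.
Qed.

(* Certificates for j >= 14, on the ranges 14..17, 18..33 and 34.., where Phi_j is
   bounded through Phi_le_numeric with x = 1 - y = 0.38, 0.415 and 0.5. *)
Lemma large_certificate (j : nat) : (14 <= j)%N -> exists lo T0 D : R, certificate j lo T0 D.
Proof.
move=> j_ge14; have jR_ge14 : 14 <= j%:R :> R by rewrite (ler_nat R 14 j).
have [j_le17|j_gt17] := leqP j 17.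
  have jR_le17 : j%:R <= 17 :> R by rewrite (ler_nat R j 17).
  exists (12/100), (236/100), (6/10); split; [split; nra | split; nra | | lra].
  rewrite (_ : 1 - 2 * (12/100) = 2 * (1 - 62/100) :> R); last by field.
  apply: le_trans (Phi_le_numeric (N0 := 13) (A := 508/100) (B := 351/10) _ _ _ _ _ _) _ => //;
    lra.
have jR_ge18 : 18 <= j%:R :> R by rewrite (ler_nat R 18 j).
have [j_le33|j_gt33] := leqP j 33.
  have jR_le33 : j%:R <= 33 :> R by rewrite (ler_nat R j 33).
  exists (85/1000), (331/100), (55/100); split; [split; nra | split; nra | | lra].
  rewrite (_ : 1 - 2 * (85/1000) = 2 * (1 - 585/1000) :> R); last by field.
  apply: le_trans (Phi_le_numeric (N0 := 17) (A := 641/100) (B := 492/10) _ _ _ _ _ _) _ => //;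
    lra.
have jR_ge34 : 34 <= j%:R :> R by rewrite (ler_nat R 34 j).
exists 0, (j%:R), (1/2); split; [split; nra | split; nra | | lra].
rewrite (_ : 1 - 2 * 0 = 2 * (1 - 1/2) :> R); last by field.
apply: le_trans (Phi_le_numeric (N0 := 33) (A := 12) (B := 120) _ _ _ _ _ _) _ => //;
  lra.
Qed.

Lemma scalar_inequality (j : nat) (b : R) : (5 <= j)%N -> 0 < b ->
  1 <= 4 * j%:R * b ^+ 2 -> (3 * j%:R + 1) * b ^+ 2 <= 1 ->
  (2 * j%:R * b - 1) * Phi j (1 - 2 * b) <= j%:R * b.
Proof.
move=> j_ge5 b_gt0 lower upper.
have [lo [T0 [D cert]]] : exists lo T0 D : R, certificate j lo T0 D.
  case: (leqP j 13) => [j_le13|j_gt13]; last exact: large_certificate.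
  by apply: small_certificate; rewrite j_ge5.
exact: certificate_sound cert.
Qed.
End ScalarInequality.

Theorem mainTheorem7 (R : realFieldType) (a : R) (ha : 0 < a) (j : nat)
    (hj : (5 <= j)%N) :
  gcoef a j >=
    j%:R^-1 *
    \sum_(1 <= k < ((j - 1) %/ 2).+1)
      \sum_(t : {ffun 'I_k -> 'I_j} |
              ((\sum_(p < k) (t p : nat))%N == (j - k - 1)%N)
              && [forall p, (0 < t p)%N])
        ((a / 2) ^+ k.+1 * ((k.+1 * k.+2)%:R / 2)
         * \prod_(p < k) (gcoef a (t p) / ((t p : nat).+1)%:R)).
Proof.
have j_gt0 : (0 < j)%N by lia.
have j_pos : 0 < j%:R :> R by rewrite ltr0n.
have scalar := scalar_inequality hj (cbin_gt0 R j) (cbin_sq_lower R j_gt0) (cbin_sq_upper R j).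
apply: le_trans (ler_wpM2l _ (double_sum_le j (ltW ha))) _; first by rewrite invr_ge0 ltW.
rewrite gcoef_cbin mulrCA; apply: ler_wpM2l; first by rewrite exprn_ge0 ?ltW.
by rewrite mulrC ler_pdivrMr // [X in _ <= X]mulrC.
Qed.
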